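(* Let $G$ be a simple graph with $\min\{\delta(G),\delta(G^c)\}\ge4$ and $|V(G)|\ge 26$. If $G$ has an edge-cut of size at most $3$, then $G^c\in\mathcal{S}_3$.
   Context: $G^c$ is the complement of $G$. $G\in\mathcal{S}_3$ means: for every $\beta:V(G)\to\mathbb{Z}_3$ with $\sum_v\beta(v)\equiv0\pmod3$ there is a strongly-connected orientation $D$ of $G$ with $d^+_D(v)-d^-_D(v)\equiv\beta(v)\pmod3$ for all $v$. *)

From HB Require Import structures.
From mathcomp Require Import all_boot all_order all_algebra.
Set Implicit Arguments. Unset Strict Implicit. Unset Printing Implicit Defensive.
Import GRing.Theory.
Local Open Scope ring_scope.

Definition simple_graph (V : finType) (e : rel V) : Prop :=
  symmetric e /\ irreflexive e.

Definition compl_graph (V : finType) (e : rel V) : rel V :=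
  fun u v => (u != v) && ~~ e u v.

Definition degree (V : finType) (e : rel V) (v : V) : nat := #|[set w | e v w]|.

Definition min_degree_ge (V : finType) (e : rel V) (k : nat) : Prop :=
  forall v : V, (k <= degree e v)%N.

Definition cut_size (V : finType) (e : rel V) (S : {set V}) : nat :=
  #|[set p : V * V | (p.1 \in S) && (p.2 \notin S) && e p.1 p.2]|.

Definition has_edge_cut_le (V : finType) (e : rel V) (k : nat) : Prop :=
  exists S : {set V}, [/\ S != set0, S != setT & (cut_size e S <= k)%N].

Definition is_orientation (V : finType) (e : rel V) (D : rel V) : Prop :=
  (forall u v, D u v -> e u v) /\ (forall u v, e u v -> D u v (+) D v u).

Definition strongly_connected (V : finType) (D : rel V) : Prop :=
  forall u v : V, connect D u v.

Definition outdeg (V : finType) (D : rel V) (v : V) : nat := #|[set w | D v w]|.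
Definition indeg (V : finType) (D : rel V) (v : V) : nat := #|[set w | D w v]|.

Definition in_S3 (V : finType) (e : rel V) : Prop :=
  forall beta : V -> 'Z_3, \sum_(v : V) beta v = 0 ->
    exists D : rel V, [/\ is_orientation e D, strongly_connected D &
      forall v : V, ((outdeg D v)%:R - (indeg D v)%:R : 'Z_3) = beta v].

(* Choose the side S of the cut whose complement has at least 13
   vertices.  Degree counting shows |S| >= 5, and at most 3 vertices outside S
   have a G-neighbour in S, so at least 10 of them are joined in G^c to all of
   S: G^c contains a K_{5,7}.  This is a computation: up to permuting each
     side, there are 252 admissible boundary functions, and for each of them a
     greedy search finds an orientation that is checked to have the required
     out-minus-in degrees and to be strongly connected.
   The main argument (S3_compl_small_cut) starts from the K_{5,7}, adds all of
   S, then every vertex with four G^c-neighbours in S; since the cut has at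
   most 3 edges at most one vertex remains, and it is added last using
   delta(G^c) >= 4. *)

From HB Require Import structures.
From mathcomp Require Import all_boot all_order all_algebra.
From mathcomp Require Import ring zify.

Set Implicit Arguments. Unset Strict Implicit. Unset Printing Implicit Defensive.
Import GRing.Theory.
Local Open Scope ring_scope.

Lemma Z3_nat (x : 'Z_3) : exists2 r, (r < 3)%N & x = r%:R.
Proof. by exists x; [exact: ltn_ord | rewrite natr_Zp]. Qed.

Lemma natZ3_mod (a b : nat) : (a %% 3 = b %% 3)%N -> (a%:R : 'Z_3) = b%:R.
Proof. by move=> eq_ab; apply: val_inj; rewrite /= !val_Zp_nat. Qed.

(* In Z/3, subtracting b is adding 2b; this turns degree conditions into
   conditions on natural numbers. *)
Lemma Z3_natB (a b : nat) : (a%:R - b%:R : 'Z_3) = (a + 2 * b)%N%:R.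
Proof.
have three0 : (3%:R : 'Z_3) = 0 by apply: val_inj.
apply/eqP; rewrite natrD natrM -subr_eq0.
have -> : forall x y : 'Z_3, x - y - (x + 2%:R * y) = - (3%:R * y) by move=> x y; ring.
by rewrite three0 mul0r oppr0.
Qed.

Lemma split_degree (n : nat) (b : 'Z_3) : (4 <= n)%N ->
  exists k, [/\ (1 <= k)%N, (k <= 3)%N & (k%:R - (n - k)%:R : 'Z_3) = b].
Proof.
move=> n_ge4.
have [r lt_r3 ->] := Z3_nat b.
pose t := ((2 * (r + n)) %% 3)%N; pose k := if t == 0%N then 3%N else t.
exists k; have t_lt3 : (t < 3)%N by rewrite ltn_mod.
rewrite Z3_natB; split; rewrite /k; case: eqP => t0; try lia.
all: by apply: natZ3_mod; rewrite /t in t0 *; lia.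
Qed.


Lemma subset_of_card (V : finType) (A : {set V}) (k : nat) : (k <= #|A|)%N ->
  exists2 B : {set V}, B \subset A & #|B| = k.
Proof.
move=> le_kA; exists [set x in take k (enum A)].
  by apply/subsetP => x; rewrite inE => /mem_take; rewrite mem_enum.
rewrite cardsE (card_uniqP (take_uniq k (enum_uniq (mem A)))) size_take -cardE.
by case: ltnP => // le_Ak; apply/eqP; rewrite eqn_leq le_Ak le_kA.
Qed.

Lemma sum_indicator (R : nzRingType) (V : finType) (A X : {set V}) :
  X \subset A -> \sum_(w in A) ((w \in X)%:R : R) = #|X|%:R.
Proof.
move=> sXA; rewrite -sum1_card natr_sum (big_setID X) /= (setIidPr sXA).
rewrite [X in _ + X]big1 ?addr0 => [|w]; last by rewrite !inE => /andP[/negPf ->].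
by apply: eq_bigr => w ->.
Qed.

Lemma card_set_sum (V : finType) (P : pred V) :
  #|[set y | P y]| = (\sum_y (P y : nat))%N.
Proof. by rewrite -sum1_card big_mkcond /=; apply: eq_bigr => y _; rewrite inE. Qed.

Lemma card_set_orU1 (V : finType) (P : pred V) (c : bool) (v : V) : ~~ P v ->
  #|[set y | P y || c && (y == v)]| = (#|[set y | P y]| + c)%N.
Proof.
move=> Pv; case: c; last by rewrite addn0; apply: eq_card => y; rewrite !inE orbF.
have -> : [set y | P y || true && (y == v)] = v |: [set y | P y].
  by apply/setP => y; rewrite !inE orbC.
by rewrite cardsU1 inE Pv addnC.
Qed.

Definition excess (V : finType) (D : rel V) (v : V) : 'Z_3 :=
  (outdeg D v)%:R - (indeg D v)%:R.

(** S_3 relative to a vertex set: the subgraph of e induced on A is in S_3,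
    witnessed by an orientation whose arcs all lie inside A. *)
Definition S3_on (V : finType) (e : rel V) (A : {set V}) : Prop :=
  forall beta : V -> 'Z_3, \sum_(v in A) beta v = 0 ->
  exists D : rel V, [/\ forall u w, D u w -> [&& u \in A, w \in A & e u w],
     forall u w, u \in A -> w \in A -> e u w -> D u w (+) D w u,
     forall u w, u \in A -> w \in A -> connect D u w &
     forall v, v \in A -> excess D v = beta v].

Lemma S3_on_setT (V : finType) (e : rel V) : S3_on e setT -> in_S3 e.
Proof.
move=> S3e beta sum_beta.
have [|D [De Dor Dcon Dbeta]] := S3e beta.
  by rewrite -[RHS]sum_beta; apply: eq_bigl => v; rewrite inE.
exists D; split=> [|u w|v]; last by apply: Dbeta; rewrite inE.
- by split=> [u w /De /and3P[] // | u w]; apply: Dor; rewrite inE.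
- by apply: Dcon; rewrite inE.
Qed.

Section VertexExtension.

Variables (V : finType) (A : {set V}) (v : V) (D : rel V) (O I : {set V}).
Hypotheses (vA : v \notin A) (sOA : O \subset A) (sIA : I \subset A).
Hypothesis DA : forall u w, D u w -> (u \in A) && (w \in A).

Definition extend_orientation : rel V :=
  fun u w => [|| D u w, (u == v) && (w \in O) | (w == v) && (u \in I)].
Local Notation D' := extend_orientation.

Let Dv u : D v u = false.
Proof. by apply/negbTE/negP => /DA; rewrite (negbTE vA). Qed.

Let Dv' u : D u v = false.
Proof. by apply/negbTE/negP => /DA; rewrite (negbTE vA) andbF. Qed.

Let neq_v x : x \in A -> x != v.
Proof. by apply: contraTneq => ->. Qed.

Lemma extend_outdeg_new : outdeg D' v = #|O|.
Proof.
apply: eq_card => y; rewrite !inE /extend_orientation Dv eqxx /=.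
by rewrite (negbTE (contra (subsetP sIA v) vA)) andbF orbF.
Qed.

Lemma extend_indeg_new : indeg D' v = #|I|.
Proof.
apply: eq_card => y; rewrite !inE /extend_orientation Dv' eqxx /=.
by rewrite (negbTE (contra (subsetP sOA v) vA)) andbF.
Qed.

Lemma extend_outdeg x : x != v -> outdeg D' x = (outdeg D x + (x \in I))%N.
Proof.
move=> xv; rewrite /outdeg -(@card_set_orU1 _ (D x) _ v) ?Dv' //; apply: eq_card => y.
by rewrite !inE /extend_orientation (negbTE xv) /= andbC.
Qed.

Lemma extend_indeg x : x != v -> indeg D' x = (indeg D x + (x \in O))%N.
Proof.
move=> xv; rewrite /indeg -(@card_set_orU1 _ (D^~ x) _ v) ?Dv //; apply: eq_card => y.
by rewrite !inE /extend_orientation (negbTE xv) /= orbF andbC.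
Qed.

Lemma extend_orients (e : rel V) : symmetric e -> irreflexive e ->
  (forall u w, D u w -> e u w) ->
  (forall u w, u \in A -> w \in A -> e u w -> D u w (+) D w u) ->
  [disjoint O & I] -> O :|: I = [set w in A | e v w] ->
  [/\ forall u w, D' u w -> e u w &
      forall u w, u \in v |: A -> w \in v |: A -> e u w -> D' u w (+) D' w u].
Proof.
move=> e_sym e_irr De Dor dOI defN.
have N_e w : (w \in O) || (w \in I) = (w \in A) && e v w.
  by rewrite -in_setU defN inE.
split=> u w.
  case/or3P=> [/De // | /andP[/eqP-> wO] | /andP[/eqP-> uI]].
    by have := N_e w; rewrite wO => /esym/andP[].
  by have := N_e u; rewrite uI orbT e_sym => /esym/andP[].
have part x : x \in A -> e v x -> (x \in O) (+) (x \in I).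
  move=> xA evx; have := N_e x; rewrite xA evx.
  by case: (boolP (x \in O)) => [/(disjointFr dOI) -> | _ /= ->].
rewrite !in_setU1 => /predU1P[-> | uA] /predU1P[-> | wA] euw.
- by rewrite e_irr in euw.
- rewrite /extend_orientation Dv Dv' eqxx (negbTE (neq_v wA)) /= orbF.
  exact: part.
- rewrite /extend_orientation Dv Dv' eqxx (negbTE (neq_v uA)) /= orbF addbC.
  by apply: part; rewrite // e_sym.
- rewrite /extend_orientation (negbTE (neq_v uA)) (negbTE (neq_v wA)) /= !orbF.
  exact: Dor.
Qed.

(* Arcs v -> O and I -> v make v reachable from and to A. *)
Lemma extend_connect (o i : V) : o \in O -> i \in I ->
  (forall x y, x \in A -> y \in A -> connect D x y) ->
  forall x y, x \in v |: A -> y \in v |: A -> connect D' x y.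
Proof.
move=> oO iI Dcon.
have DD' : forall x y, x \in A -> y \in A -> connect D' x y.
  move=> x y xA yA; apply: connect_sub (Dcon x y xA yA) => a b Dab.
  by apply: connect1; rewrite /extend_orientation Dab.
have vo : connect D' v o by apply: connect1; rewrite /extend_orientation eqxx oO orbT.
have iv : connect D' i v by apply: connect1; rewrite /extend_orientation eqxx iI !orbT.
have [oA iA] := (subsetP sOA o oO, subsetP sIA i iI).
move=> x y /setU1P[-> | xA] /setU1P[-> | yA]; first exact: connect0.
- exact: connect_trans vo (DD' _ _ oA yA).
- exact: connect_trans (DD' _ _ xA iA) iv.
- exact: DD'.
Qed.

End VertexExtension.

(* A vertex with at least four neighbours in A can be added: split its
   neighbourhood N into out-neighbours O and in-neighbours I realising beta v,
   and correct the boundary values on A by the arcs at v. *)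
Lemma S3_on_add (V : finType) (e : rel V) (A : {set V}) (v : V) :
  symmetric e -> irreflexive e -> S3_on e A -> v \notin A ->
  (4 <= #|[set w in A | e v w]|)%N -> S3_on e (v |: A).
Proof.
move=> e_sym e_irr S3A vA; set N := [set w in A | e v w] => N_ge4 beta sum_beta.
have sNA : N \subset A by apply/subsetP => w; rewrite inE => /andP[].
have [k [k_ge1 k_le3 beta_v]] := split_degree (beta v) N_ge4.
have [O sON card_O] := subset_of_card (leq_trans k_le3 (ltnW N_ge4)).
pose I := N :\: O.
have card_I : #|I| = (#|N| - k)%N by rewrite cardsD (setIidPr sON) card_O.
have sOA : O \subset A := subset_trans sON sNA.
have sIA : I \subset A := subset_trans (subsetDl N O) sNA.
pose beta' w := beta w - ((w \in I)%:R : 'Z_3) + (w \in O)%:R.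
have sum_beta' : \sum_(w in A) beta' w = 0.
  rewrite big_split big_split /= sumrN !sum_indicator // card_I card_O.
  move: sum_beta; rewrite big_setU1 //= -beta_v => sum_beta.
  by rewrite -[RHS]sum_beta; ring.
have [D [DA Dor Dcon Dbeta]] := S3A beta' sum_beta'.
have DA' u w : D u w -> (u \in A) && (w \in A) by move/DA => /and3P[-> ->].
have dOI : [disjoint O & I] by rewrite /I disjoint_sym disjoints_subset setDE subsetIr.
have defN : O :|: I = N by rewrite /I -{1}(setIidPr sON) setID.
have [|De' Dor'] := extend_orients vA DA' e_sym e_irr _ Dor dOI defN.
  by move=> u w /DA /and3P[].
have [o oO] : exists o, o \in O by apply/set0Pn; rewrite -card_gt0 card_O.
have [i iI] : exists i, i \in I by apply/set0Pn; rewrite -card_gt0 card_I; lia.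
exists (extend_orientation v D O I); split => //.
- move=> u w D'uw; rewrite De' // andbT.
  by case/or3P: D'uw => [/DA' /andP[uA wA] | /andP[/eqP-> /(subsetP sOA) wA]
    | /andP[/eqP-> /(subsetP sIA) uA]]; rewrite !in_setU1 ?uA ?wA ?eqxx ?orbT.
- by move=> x y; apply: (extend_connect sOA sIA oO iI Dcon).
- move=> x /setU1P[-> | xA].
    rewrite /excess (extend_outdeg_new O vA sIA DA') (extend_indeg_new I vA sOA DA').
    by rewrite card_O card_I.
  have xv : x != v by apply: contraNneq vA => <-.
  rewrite /excess (extend_outdeg O I vA DA' xv) (extend_indeg O I vA DA' xv) !natrD.
  transitivity ((outdeg D x)%:R - (indeg D x)%:R + (x \in I)%:R - (x \in O)%:R : 'Z_3).
    by ring.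
  by rewrite -/(excess D x) Dbeta // /beta'; ring.
Qed.

Lemma S3_on_grow (V : finType) (e : rel V) (A B : {set V}) :
  symmetric e -> irreflexive e -> S3_on e A -> A \subset B ->
  (forall v, v \in B -> v \notin A -> (4 <= #|[set w in A | e v w]|)%N) ->
  S3_on e B.
Proof.
move=> e_sym e_irr; move def_n : #|B :\: A| => n.
elim: n A def_n => [|n IHn] A card_BA S3A sAB deg_A.
  suff -> : B = A by [].
  by apply/eqP; rewrite eqEsubset sAB andbT -setD_eq0 -cards_eq0 card_BA.
have [v] : exists v, v \in B :\: A by apply/set0Pn; rewrite -card_gt0 card_BA.
rewrite inE => /andP[vA vB].
apply: (IHn (v |: A)).
- have -> : B :\: (v |: A) = (B :\: A) :\ v.
    by apply/setP => x; rewrite !inE negb_or andbA.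
  by apply/eqP; rewrite -eqSS -card_BA (cardsD1 v (B :\: A)) inE vA vB.
- exact: S3_on_add (deg_A _ vB vA).
- by rewrite subUset sub1set vB sAB.
- move=> x xB; rewrite in_setU1 negb_or => /andP[_ xA].
  apply: leq_trans (deg_A _ xB xA) (subset_leq_card _).
  by apply/subsetP => w; rewrite !inE => /andP[-> ->]; rewrite orbT.
Qed.

(* If all but at most one vertex lie in A, minimum degree 4 lets the last
   vertex be added: all its neighbours are in A. *)
Lemma S3_on_all_but_one (V : finType) (e : rel V) (A : {set V}) :
  symmetric e -> irreflexive e -> min_degree_ge e 4 -> S3_on e A ->
  (forall v1 v2, v1 \notin A -> v2 \notin A -> v1 = v2) -> S3_on e setT.
Proof.
move=> e_sym e_irr deg_e S3A outside1.
have [t tA | allA] := pickP (fun v => v \notin A); last first.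
  suff -> : setT = A by [].
  by apply/setP => x; rewrite inE; move/negbFE: (allA x).
have -> : setT = t |: A.
  apply/setP => x; rewrite in_setT in_setU1.
  by case: (boolP (x \in A)) => xA; rewrite ?orbT // (outside1 _ _ xA tA) eqxx.
apply: S3_on_add => //; apply: leq_trans (deg_e t) (subset_leq_card _).
apply/subsetP => w; rewrite !inE => etw; rewrite etw andbT.
by apply: contraT => /outside1 /(_ tA) wt; rewrite wt e_irr in etw.
Qed.

Lemma sum_excess (V : finType) (D : rel V) : \sum_w excess D w = 0.
Proof.
rewrite sumrB -!natr_sum /outdeg /indeg.
under eq_bigr do rewrite card_set_sum.
under [X in _ - X%:R]eq_bigr do rewrite card_set_sum.
by rewrite exchange_big subrr.
Qed.

Lemma excess_relU (V : finType) (D1 D2 : rel V) :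
  (forall u w, D1 u w -> D2 u w = false) ->
  forall x, excess (relU D1 D2) x = excess D1 x + excess D2 x.
Proof.
move=> D12 x.
have card_relU (P1 P2 : pred V) : (forall y, P1 y -> P2 y = false) ->
    #|[set y | P1 y || P2 y]| = (#|[set y | P1 y]| + #|[set y | P2 y]|)%N.
  move=> P12; rewrite -cardsUI.
  have -> : [set y | P1 y] :&: [set y | P2 y] = set0.
    by apply/setP => y; rewrite !inE; case: (boolP (P1 y)) => // /P12 ->.
  by rewrite cards0 addn0; apply: eq_card => y; rewrite !inE.
by rewrite /excess /outdeg /indeg !card_relU ?natrD => [|y /D12|y /D12] //; ring.
Qed.

(* Adding edges inside A preserves S_3 on A: the new edges D0 are oriented
   first, and the orientation for e1 is asked to realise beta - excess D0. *)
Lemma S3_on_super (V : finType) (e1 e2 : rel V) (A : {set V}) :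
  symmetric e1 -> symmetric e2 -> irreflexive e2 -> S3_on e1 A ->
  (forall u w, u \in A -> w \in A -> e1 u w -> e2 u w) -> S3_on e2 A.
Proof.
move=> e1_sym e2_sym e2_irr S3A sub12 beta sum_beta.
pose D0 u w := [&& u \in A, w \in A, e2 u w, ~~ e1 u w & enum_rank u < enum_rank w]%N.
have D0A u w : D0 u w -> (u \in A) && (w \in A) by case/and5P => -> ->.
have excess0_out w : w \notin A -> excess D0 w = 0.
  move=> wA; rewrite /excess /outdeg /indeg !(eq_card (B := pred0)) ?card0 ?subrr //;
    by move=> y; rewrite !inE; apply/negP => /D0A /andP[]; rewrite (negPf wA) ?andbF.
pose beta' w := beta w - excess D0 w.
have sum_beta' : \sum_(w in A) beta' w = 0.
  rewrite /beta' sumrB sum_beta.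
  suff -> : \sum_(w in A) excess D0 w = \sum_w excess D0 w by rewrite sum_excess subrr.
  by rewrite [RHS](bigID (mem A)) /= [X in _ + X]big1 ?addr0 // => w /excess0_out.
have [D [DA Dor Dcon Dbeta]] := S3A beta' sum_beta'.
have D_D0 u w : D u w -> D0 u w = false.
  by move/DA => /and3P[_ _ e1uw]; rewrite /D0 e1uw !andbF.
exists (relU D D0); split.
- move=> u w /orP[/DA /and3P[uA wA e1uw] | /and5P[-> -> -> _ _]] //.
  by rewrite uA wA sub12.
- move=> u w uA wA e2uw /=.
  have [e1uw | ne1uw] := boolP (e1 u w).
    have e1wu : e1 w u by rewrite e1_sym.
    by rewrite /D0 e1uw e1wu !andbF !orbF; apply: Dor.
  have noD x y : ~~ e1 x y -> D x y = false.
    by move=> ne1xy; apply/negbTE/negP => /DA /and3P[_ _]; apply/negP.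
  have ne1wu : ~~ e1 w u by rewrite e1_sym.
  rewrite !noD // /D0 uA wA e2uw e2_sym e2uw ne1uw ne1wu /=.
  have : enum_rank u != enum_rank w.
    by apply: contraTneq e2uw => /enum_rank_inj ->; rewrite e2_irr.
  by rewrite neq_ltn; case: ltngtP.
- move=> u w uA wA; apply: connect_sub (Dcon u w uA wA) => x y Dxy.
  by apply: connect1; rewrite /= Dxy.
- by move=> w wA; rewrite excess_relU // Dbeta // /beta' subrK.
Qed.

(** Vertices are indexed 0..11, the indices below 5 forming the small side.
    An orientation is encoded by the five rows M of a 5x7 boolean matrix: the
    edge between i < 5 and j >= 5 is oriented i -> j iff M_i,(j-5) holds. *)

Section K57Computation.

Local Open Scope nat_scope.

Definition arcK (M : seq (seq bool)) (i j : nat) : bool :=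
  if (i < 5) && (5 <= j < 12) then nth false (nth [::] M i) (j - 5)
  else if (5 <= i < 12) && (j < 5) then ~~ nth false (nth [::] M j) (i - 5)
  else false.

Definition outK M i := count (arcK M i) (iota 0 12).
Definition inK M i := count (arcK M ^~ i) (iota 0 12).

Definition grow (r : rel nat) (R : seq nat) : seq nat :=
  [seq j <- iota 0 12 | (j \in R) || has (r ^~ j) R].

(* M realises the boundary values b (out + 2 in = out - in mod 3) and is
   strongly connected: every vertex is reachable from and reaches vertex 0. *)
Definition good (M : seq (seq bool)) (b : seq nat) : bool :=
  [&& all (fun i => (outK M i + 2 * inK M i) %% 3 == nth 0 b i) (iota 0 12),
      all (fun j => j \in iter 12 (grow (arcK M)) [:: 0]) (iota 0 12) &
      all (fun j => j \in iter 12 (grow (fun i j => arcK M j i)) [:: 0]) (iota 0 12)].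

(* The boundary values on one side, up to permutation: a0 zeros, a1 ones and
   the remaining n - a0 - a1 values equal to two. *)
Definition sorted_profile (a0 a1 n : nat) : seq nat :=
  nseq a0 0 ++ nseq a1 1 ++ nseq (n - a0 - a1) 2.

(* The greedy search producing candidate witnesses: choose for each small-side
   vertex an out-degree o and for each large-side vertex an in-degree t that
   are compatible with b (out + 2 in is 14 - o, resp. 5 + t; both directions
   are used at every vertex, and the two totals must agree), and realise these
   degrees by letting each small-side vertex point to the large-side vertices
   of largest remaining demand.  Only the final [good] check matters for
   correctness. *)
Fixpoint choose (ls : seq (seq nat)) : seq (seq nat) :=
  if ls is l :: ls' then [seq x :: r | x <- l, r <- choose ls'] else [:: [::]].

Fixpoint realize (outs demand : seq nat) : seq (seq bool) :=
  if outs is o :: outs' then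
    let picked := take o (sort (fun j k => nth 0 demand k <= nth 0 demand j) (iota 0 7)) in
    [seq j \in picked | j <- iota 0 7] ::
      realize outs' [seq nth 0 demand j - (j \in picked) | j <- iota 0 7]
  else [::].

(* Written with an explicit [if] so that evaluation stops at the first success. *)
Fixpoint find_good (b : seq nat) (cands : seq (seq (seq bool))) : bool :=
  if cands is M :: cands' then if good M b then true else find_good b cands'
  else false.

Definition search (b : seq nat) : bool :=
  let outs := [seq [seq o <- iota 1 6 | (14 - o) %% 3 == x] | x <- take 5 b] in
  let ins := [seq [seq t <- iota 1 4 | (5 + t) %% 3 == x] | x <- drop 5 b] in
  find_good b [seq realize ot.1 ot.2 |
    ot <- [seq (o, t) | o <- choose outs, t <- choose ins] & sumn ot.1 == sumn ot.2].

Definition K57_check : bool :=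
  all (fun a0 => all (fun a1 => all (fun d0 => all (fun d1 =>
    let b := sorted_profile a0 a1 5 ++ sorted_profile d0 d1 7 in
    if sumn b %% 3 == 0 then search b else true)
   (iota 0 (8 - d0))) (iota 0 8)) (iota 0 (6 - a0))) (iota 0 6).

Lemma K57_checkP : K57_check.
Proof. by vm_compute. Qed.

Lemma find_goodP b cands : find_good b cands -> exists M, good M b.
Proof.
elim: cands => //= M cands IH.
by case: ifP => [goodM _ | _ /IH //]; exists M.
Qed.

Lemma K57_witness a0 a1 d0 d1 : a0 + a1 <= 5 -> d0 + d1 <= 7 ->
  let b := sorted_profile a0 a1 5 ++ sorted_profile d0 d1 7 in
  sumn b %% 3 = 0 -> exists M, good M b.
Proof.
move=> le_a le_d b sum_b.
have iota_a0 : a0 \in iota 0 6 by rewrite mem_iota; lia.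
have iota_a1 : a1 \in iota 0 (6 - a0) by rewrite mem_iota; lia.
have iota_d0 : d0 \in iota 0 8 by rewrite mem_iota; lia.
have iota_d1 : d1 \in iota 0 (8 - d0) by rewrite mem_iota; lia.
move/allP: K57_checkP => /(_ a0 iota_a0) /allP /(_ a1 iota_a1).
move=> /allP /(_ d0 iota_d0) /allP /(_ d1 iota_d1).
by rewrite /= -/b sum_b eqxx => /find_goodP.
Qed.

Lemma grow_path (r : rel nat) n R j : j \in iter n (grow r) R ->
  exists2 i, i \in R & exists2 p, path r i p & last i p = j.
Proof.
elim: n j => [|n IHn] j /=; first by move=> jR; exists j => //; exists [::].
rewrite mem_filter => /andP[/orP[/IHn // | /hasP[k /IHn[i iR [p r_p <-]] rkj]] _].
by exists i => //; exists (rcons p j); rewrite ?rcons_path ?r_p ?last_rcons.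
Qed.

Lemma arcK_bound M i j : arcK M i j -> (i < 12) && (j < 12).
Proof. rewrite /arcK; case: ifP => [|_]; [|case: ifP] => //; lia. Qed.

Lemma arcK_sides M i j : arcK M i j -> (i < 5) != (j < 5).
Proof. rewrite /arcK; case: ifP => [|_]; [|case: ifP] => //; lia. Qed.

Lemma arcK_xor M i j : i < 12 -> j < 12 -> (i < 5) != (j < 5) ->
  arcK M i j (+) arcK M j i.
Proof.
rewrite /arcK => lt_i lt_j; case: (ltnP i 5) => i5; case: (ltnP j 5) => j5 //= _.
- by rewrite lt_j; case: nth.
- by rewrite lt_i; case: nth.
Qed.

End K57Computation.

Lemma card_index (V : finType) (s : seq V) (x0 : V) (Pr : pred nat) : uniq s ->
  #|[set w | (w \in s) && Pr (index w s)]| = count Pr (iota 0 (size s)).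
Proof.
move=> s_uniq; pose L := [seq nth x0 s j | j <- iota 0 (size s) & Pr j].
have L_uniq : uniq L.
  rewrite map_inj_in_uniq ?filter_uniq ?iota_uniq // => i j.
  rewrite !mem_filter !mem_iota /= => /andP[_ lt_i] /andP[_ lt_j] eq_ij.
  by rewrite -(index_uniq x0 lt_i s_uniq) -(index_uniq x0 lt_j s_uniq) eq_ij.
rewrite -size_filter -(size_map (nth x0 s)) -(card_uniqP L_uniq).
apply: eq_card => w; rewrite inE; apply/andP/mapP => [[ws Pw] | [j]].
  by exists (index w s); rewrite ?nth_index // mem_filter Pw mem_iota /= index_mem.
rewrite mem_filter mem_iota /= => /andP[Pj lt_j] ->.
by rewrite mem_nth // index_uniq.
Qed.

Definition complete_bipartite (V : finType) (P Q : {set V}) : rel V :=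
  fun u w => (u \in P) && (w \in Q) || (u \in Q) && (w \in P).

Section Transport.

Variables (V : finType) (s : seq V) (M : seq (seq bool)).
Hypotheses (s_uniq : uniq s) (size_s : size s = 12%N).

Definition transport : rel V :=
  fun u w => [&& u \in s, w \in s & arcK M (index u s) (index w s)].

Lemma transport_outdeg u : u \in s -> outdeg transport u = outK M (index u s).
Proof.
move=> us; rewrite /outdeg /outK -size_s -(card_index u _ s_uniq).
by apply: eq_card => w; rewrite !inE /transport us.
Qed.

Lemma transport_indeg u : u \in s -> indeg transport u = inK M (index u s).
Proof.
move=> us; rewrite /indeg /inK -size_s -(card_index u _ s_uniq).
by apply: eq_card => w; rewrite !inE /transport us.
Qed.

Lemma transport_connect (b : seq nat) : good M b ->
  forall u w, u \in s -> w \in s -> connect transport u w.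
Proof.
case/and3P=> _ reach_fw reach_bw u w us ws.
pose f := nth u s.
have f_arc i j : arcK M i j -> transport (f i) (f j).
  move=> Mij; case/andP: (arcK_bound Mij) => lt_i lt_j.
  by rewrite /transport !mem_nth ?size_s ?index_uniq ?size_s.
have reach (r : rel nat) (D : rel V) : {homo f : i j / r i j >-> D i j} ->
    all (fun j => j \in iter 12 (grow r) [:: 0%N]) (iota 0 12) ->
    forall j, (j < 12)%N -> connect D (f 0%N) (f j).
  move=> f_hom /allP reach_r j lt_j; have j_iota : j \in iota 0 12 by rewrite mem_iota.
  have [_ /[!inE] /eqP -> [p r_p <-]] := grow_path (reach_r j j_iota).
  by apply/connectP; exists (map f p); [apply: homo_path r_p | rewrite last_map].
have fw := reach (arcK M) transport f_arc reach_fw.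
have bw j : (j < 12)%N -> connect transport (f j) (f 0%N).
  move=> lt_j; have := reach (fun i j => arcK M j i) [rel x y | transport y x].
  by rewrite connect_rev; apply => // i k /f_arc.
rewrite -(nth_index u us) -(nth_index u ws) -/f.
by apply: connect_trans (bw _ _) (fw _ _); rewrite -size_s index_mem.
Qed.

Lemma transport_excess (b : seq nat) (beta : V -> 'Z_3) : good M b ->
  map beta s = map (fun k => k%:R) b -> forall u, u \in s -> excess transport u = beta u.
Proof.
case/and3P=> /allP deg_ok _ _ beta_s u us.
have lt_b : (index u s < size b)%N.
  by rewrite -(size_map (fun k => k%:R : 'Z_3)) -beta_s size_map index_mem.
have -> : beta u = (nth 0%N b (index u s))%:R.
  rewrite -[in LHS](nth_index u us) -(nth_map u (beta u)) ?index_mem //.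
  by rewrite beta_s (nth_map 0%N).
rewrite /excess transport_outdeg // transport_indeg // Z3_natB.
have /eqP <- : ((outK M (index u s) + 2 * inK M (index u s)) %% 3 == nth 0 b (index u s))%N.
  by apply: deg_ok; rewrite mem_iota /= -size_s index_mem.
by apply: natZ3_mod; rewrite modn_mod.
Qed.

Lemma transport_bipartite (P Q : {set V}) : [disjoint P & Q] -> s =i P :|: Q ->
  (forall u, u \in s -> (u \in P) = (index u s < 5)%N) ->
  [/\ forall u w, transport u w -> complete_bipartite P Q u w &
      forall u w, u \in s -> w \in s -> complete_bipartite P Q u w ->
        transport u w (+) transport w u].
Proof.
move=> dPQ mem_s side.
have bip u w : u \in s -> w \in s ->
    complete_bipartite P Q u w = ((index u s < 5)%N != (index w s < 5)%N).
  move=> us ws; rewrite /complete_bipartite -!side //.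
  have inQ x : x \in s -> (x \in Q) = (x \notin P).
    rewrite mem_s inE; case: (boolP (x \in P)) => [/(disjointFr dPQ) | _] //=.
  by rewrite !inQ //; case: (u \in P); case: (w \in P).
split=> u w; first by case/and3P=> us ws Muw; rewrite bip //; apply: arcK_sides Muw.
move=> us ws; rewrite bip // /transport us ws.
by apply: arcK_xor; rewrite -size_s index_mem.
Qed.

End Transport.

Lemma enum_by_value (V : finType) (X : {set V}) (beta : V -> 'Z_3) :
  exists s a0 a1, [/\ uniq s, s =i X, (a0 + a1 <= #|X|)%N &
    map beta s = map (fun k => k%:R) (sorted_profile a0 a1 #|X|)].
Proof.
pose cls r := [set x in X | beta x == r%:R].
pose s := enum (cls 0%N) ++ enum (cls 1%N) ++ enum (cls 2%N).
have mem_cls x r : (x \in enum (cls r)) = (x \in X) && (beta x == r%:R).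
  by rewrite mem_enum inE.
have cls_eq r q : (r < 3)%N -> (q < 3)%N -> (r%:R == q%:R :> 'Z_3) = (r == q).
  by move=> lt_r lt_q; rewrite -val_eqE /= !val_Zp_nat // !modn_small.
have s_uniq : uniq s.
  rewrite !cat_uniq !enum_uniq /= !andbT; apply/andP; split; apply/hasPn => x.
    by rewrite mem_cat !mem_cls => /orP[] /andP[_ /eqP->]; rewrite cls_eq ?andbF.
  by rewrite !mem_cls => /andP[_ /eqP->]; rewrite cls_eq ?andbF.
have mem_s : s =i X.
  move=> x; rewrite !mem_cat !mem_cls -!andb_orr andb_idr // => _.
  by have [r lt_r3 ->] := Z3_nat (beta x); case: r lt_r3 => [|[|[|]]].
have map_cls r : map beta (enum (cls r)) = nseq #|cls r| r%:R.
  rewrite cardE -(size_map beta); apply/all_pred1P/allP => y /mapP[x].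
  by rewrite mem_cls => /andP[_ /eqP bx] ->; apply/eqP.
have card_X : #|X| = (#|cls 0%N| + #|cls 1%N| + #|cls 2%N|)%N.
  by rewrite -(eq_card mem_s) (card_uniqP s_uniq) !size_cat -!cardE addnA.
exists s, #|cls 0%N|, #|cls 1%N|; split => //; first by rewrite card_X leq_addr.
rewrite /sorted_profile !map_cat !map_nseq card_X !map_cls.
by congr (_ ++ (_ ++ nseq _ _)); lia.
Qed.

Lemma K57_S3 (V : finType) (P Q : {set V}) :
  [disjoint P & Q] -> #|P| = 5%N -> #|Q| = 7%N ->
  S3_on (complete_bipartite P Q) (P :|: Q).
Proof.
move=> dPQ card_P card_Q beta sum_beta.
have [sP [a0 [a1 [sP_uniq mem_sP le_a beta_sP]]]] := enum_by_value P beta.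
have [sQ [d0 [d1 [sQ_uniq mem_sQ le_d beta_sQ]]]] := enum_by_value Q beta.
pose s := sP ++ sQ; pose b := sorted_profile a0 a1 5 ++ sorted_profile d0 d1 7.
have beta_s : map beta s = map (fun k => k%:R) b.
  by rewrite /s map_cat beta_sP beta_sQ card_P card_Q -map_cat.
have s_uniq : uniq s.
  rewrite cat_uniq sP_uniq sQ_uniq andbT /=; apply/hasPn => x.
  by rewrite mem_sQ mem_sP => /(disjointFl dPQ) ->.
have mem_s : s =i P :|: Q by move=> x; rewrite mem_cat mem_sP mem_sQ inE.
have size_sP : size sP = 5%N by rewrite -card_P -(card_uniqP sP_uniq); apply: eq_card.
have size_s : size s = 12%N.
  by rewrite -(size_map beta) beta_s size_map !size_cat !size_nseq; lia.
have sum_b : (sumn b %% 3 = 0)%N.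
  have : \sum_(x <- map beta s) x = 0.
    by rewrite big_map (big_uniq _ s_uniq) -[RHS]sum_beta; apply: eq_bigl.
  rewrite beta_s big_map -natr_sum -sumnE => /(congr1 val).
  by rewrite /= val_Zp_nat.
rewrite card_P in le_a; rewrite card_Q in le_d.
have [M goodM] := K57_witness le_a le_d sum_b.
have side u : u \in s -> (u \in P) = (index u s < 5)%N.
  rewrite /s index_cat mem_cat -mem_sP; case: ifP => [uP _ | _ /= _].
    by rewrite -size_sP index_mem.
  by rewrite size_sP; lia.
have [arcs orient] := transport_bipartite M size_s dPQ mem_s side.
exists (transport s M); split.
- move=> u w Tuw; rewrite arcs // andbT.
  by case/and3P: Tuw => us ws _; rewrite -!mem_s us ws.
- by move=> u w; rewrite -!mem_s; apply: orient.
- move=> u w; rewrite -!mem_s; exact: (transport_connect s_uniq size_s goodM).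
- by move=> u; rewrite -mem_s; apply: (transport_excess s_uniq size_s goodM beta_s).
Qed.

Lemma compl_sym (V : finType) (e : rel V) : symmetric e -> symmetric (compl_graph e).
Proof. by move=> e_sym u w; rewrite /compl_graph eq_sym e_sym. Qed.

Lemma compl_irr (V : finType) (e : rel V) : irreflexive (compl_graph e).
Proof. by move=> u; rewrite /compl_graph eqxx. Qed.

Definition nbrs_in (V : finType) (e : rel V) (S : {set V}) (t : V) : nat :=
  #|[set a in S | e a t]|.

Lemma cut_size_pairs (V : finType) (e : rel V) (S : {set V}) :
  cut_size e S = (\sum_a \sum_b ((a \in S) && (b \notin S) && e a b : nat))%N.
Proof. by rewrite /cut_size card_set_sum pair_big; apply: eq_bigl. Qed.

Lemma cut_size_out (V : finType) (e : rel V) (S : {set V}) :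
  cut_size e S = (\sum_(a in S) #|[set w | (w \notin S) && e a w]|)%N.
Proof.
rewrite cut_size_pairs [RHS]big_mkcond /=; apply: eq_bigr => a _.
case: (boolP (a \in S)) => aS /=; first by rewrite card_set_sum.
by rewrite big1.
Qed.

Lemma cut_size_in (V : finType) (e : rel V) (S : {set V}) :
  cut_size e S = (\sum_(t in ~: S) nbrs_in e S t)%N.
Proof.
rewrite cut_size_pairs exchange_big [RHS]big_mkcond /=; apply: eq_bigr => t _.
rewrite inE /nbrs_in; case: (boolP (t \in S)) => tS /=.
  by rewrite big1 // => a _; rewrite andbF.
by rewrite card_set_sum; apply: eq_bigr => a _; rewrite andbT.
Qed.

Lemma cut_sizeC (V : finType) (e : rel V) (S : {set V}) : symmetric e ->
  cut_size e (~: S) = cut_size e S.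
Proof.
move=> e_sym; rewrite !cut_size_pairs exchange_big.
apply: eq_bigr => a _; apply: eq_bigr => b _.
by rewrite !inE negbK e_sym; case: (a \in S); case: (b \in S).
Qed.

(* A nonempty side of a cut with at most 3 edges in a graph of minimum degree
   at least 4 has at least 5 vertices: each of its k vertices has at least
   4 - (k - 1) neighbours across the cut. *)
Lemma cut_side_large (V : finType) (e : rel V) (S : {set V}) : simple_graph e ->
  min_degree_ge e 4 -> S != set0 -> (cut_size e S <= 3)%N -> (5 <= #|S|)%N.
Proof.
move=> [_ e_irr] deg_e S0 cut3.
have deg_split s : s \in S ->
    (4 <= #|S| - 1 + #|[set w | (w \notin S) && e s w]|)%N.
  move=> sS; apply: leq_trans (deg_e s) _; rewrite /degree.
  rewrite -(cardsID S [set w | e s w]); apply: leq_add.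
    have : [set w | e s w] :&: S \subset S :\ s.
      apply/subsetP => w; rewrite !inE => /andP[esw ->]; rewrite andbT.
      by apply: contraTneq esw => ->; rewrite e_irr.
    by move/subset_leq_card; rewrite (cardsD1 s S) sS; lia.
  by apply: subset_leq_card; apply/subsetP => w; rewrite !inE => /andP[-> ->].
have : (\sum_(s in S) 4 <=
    \sum_(s in S) (#|S| - 1 + #|[set w | (w \notin S) && e s w]|))%N.
  exact: leq_sum.
rewrite big_split /= -cut_size_out !sum_nat_const.
have : (0 < #|S|)%N by rewrite card_gt0.
by move: cut3; set c := cut_size e S; set k := #|S|; nia.
Qed.

Lemma compl_joined (V : finType) (e : rel V) (S : {set V}) (s t : V) :
  t \notin S -> nbrs_in e S t = 0%N -> s \in S -> compl_graph e s t.
Proof.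
move=> tS /eqP; rewrite cards_eq0 => /eqP/setP/(_ s) nbr0 sS.
rewrite /compl_graph; apply/andP; split; first by apply: contraNneq tS => <-.
by apply/negP => est; move: nbr0; rewrite !inE sS est.
Qed.

Lemma sum_le3_unique (V : finType) (T : {set V}) (f : V -> nat) :
  (\sum_(t in T) f t <= 3)%N ->
  forall t1 t2, t1 \in T -> t2 \in T -> (2 <= f t1)%N -> (2 <= f t2)%N -> t1 = t2.
Proof.
move=> sum3 t1 t2 t1T t2T f1 f2; apply/eqP/negPn/negP => t12.
move: sum3; rewrite (bigD1 t1) //= (bigD1 t2) /=; last by rewrite t2T eq_sym t12.
lia.
Qed.

Lemma compl_nbrs_split (V : finType) (e : rel V) (S : {set V}) (v : V) :
  symmetric e -> v \notin S ->
  (#|[set w in S | compl_graph e v w]| + nbrs_in e S v)%N = #|S|.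
Proof.
move=> e_sym vS; rewrite -(cardsID [set w | e w v] S) addnC; congr (_ + _).
  by apply: eq_card => w; rewrite !inE andbC.
apply: eq_card => w; rewrite !inE /compl_graph e_sym.
case: (boolP (w \in S)) => wS; rewrite ?andbF // andbT.
by rewrite (_ : v != w) //; apply: contraNneq vS => ->.
Qed.

Lemma compl_contains_K57 (V : finType) (e : rel V) (S : {set V}) :
  simple_graph e -> min_degree_ge e 4 -> S != set0 ->
  (cut_size e S <= 3)%N -> (13 <= #|~: S|)%N ->
  exists P Q : {set V}, [/\ P \subset S, [disjoint S & Q], #|P| = 5%N, #|Q| = 7%N &
    forall s q, s \in S -> q \in Q -> compl_graph e s q].
Proof.
move=> e_simple deg_e S0 cut3 far13.
pose C := [set t in ~: S | nbrs_in e S t == 0%N].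
have sCS : C \subset ~: S by apply/subsetP => t; rewrite inE => /andP[].
(* only the at most 3 vertices of ~: S :\: C send edges into S *)
have C10 : (10 <= #|C|)%N.
  have : (#|~: S :\: C| <= 3)%N.
    apply: leq_trans cut3; rewrite cut_size_in (big_setID C) /=.
    apply: leq_trans (leq_addl _ _); rewrite -sum1_card; apply: leq_sum => t.
    by rewrite !inE => /andP[nbr tS]; rewrite lt0n; move: nbr; rewrite tS.
  by have := cardsID C (~: S); rewrite (setIidPr sCS); lia.
have [P sPS card_P] := subset_of_card (cut_side_large e_simple deg_e S0 cut3).
have [Q sQC card_Q] := subset_of_card (leq_trans (isT : 7 <= 10)%N C10).
exists P, Q; split => //.
  by rewrite disjoint_sym disjoints_subset (subset_trans sQC sCS).
move=> s q sS /(subsetP sQC); rewrite inE => /andP[qS /eqP nbr0].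
by apply: compl_joined nbr0 sS; rewrite -in_setC.
Qed.

(* The main argument: starting from the K_{5,7} in G^c, absorb S, then every
   vertex with four G^c-neighbours in S; each remaining vertex has at least two
   G-neighbours in S, so by the cut bound there is at most one of them. *)
Lemma S3_compl_small_cut (V : finType) (e : rel V) (S : {set V}) :
  simple_graph e -> min_degree_ge e 4 -> min_degree_ge (compl_graph e) 4 ->
  S != set0 -> (cut_size e S <= 3)%N -> (13 <= #|~: S|)%N ->
  in_S3 (compl_graph e).
Proof.
move=> e_simple deg_e deg_ec S0 cut3 far13; have [e_sym e_irr] := e_simple.
have H_sym := compl_sym e_sym; have H_irr := compl_irr e.
have S5 := cut_side_large e_simple deg_e S0 cut3.
have [P [Q [sPS dSQ card_P card_Q joinSQ]]] :=
  compl_contains_K57 e_simple deg_e S0 cut3 far13.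
have S3_PQ : S3_on (compl_graph e) (P :|: Q).
  have dPQ : [disjoint P & Q] by apply: disjointWl dSQ.
  apply: (S3_on_super _ H_sym H_irr (K57_S3 dPQ card_P card_Q)).
    by move=> u w; rewrite /complete_bipartite orbC [_ && (w \in Q)]andbC andbC.
  by move=> u w _ _ /orP[] /andP[uX wY]; last rewrite H_sym;
    apply: joinSQ => //; apply: (subsetP sPS).
have S3_SQ : S3_on (compl_graph e) (S :|: Q).
  apply: (S3_on_grow H_sym H_irr S3_PQ (setSU _ sPS)) => v.
  rewrite !inE => /orP[vS | vQ]; last by rewrite vQ orbT.
  move=> _; apply: leq_trans (_ : 4 <= #|Q|)%N (subset_leq_card _).
    by rewrite card_Q.
  by apply/subsetP => w wQ; rewrite !inE wQ orbT joinSQ.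
pose B := [set v | (v \in S) || (4 <= #|[set w in S | compl_graph e v w]|)%N].
have S3_B : S3_on (compl_graph e) B.
  apply: (S3_on_grow H_sym H_irr S3_SQ).
    apply/subsetP => v; rewrite !inE => /orP[-> // | vQ]; apply/orP; right.
    apply: leq_trans (leq_trans (isT : 4 <= 5)%N S5) (subset_leq_card _).
    by apply/subsetP => w wS; rewrite inE wS H_sym joinSQ.
  move=> v; rewrite !inE => /orP[-> // | deg4] _; apply: leq_trans deg4 _.
  by apply: subset_leq_card; apply/subsetP => w; rewrite !inE => /andP[-> ->].
have outside v : v \notin B -> v \in ~: S /\ (2 <= nbrs_in e S v)%N.
  rewrite inE negb_or -ltnNge => /andP[vS deg3]; rewrite inE vS.
  by have := compl_nbrs_split e_sym vS; lia.
apply: S3_on_setT; apply: S3_on_all_but_one H_sym H_irr deg_ec S3_B _.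
have cut_in : (\sum_(t in ~: S) nbrs_in e S t <= 3)%N by rewrite -cut_size_in.
move=> v1 v2 /outside[v1S v1e] /outside[v2S v2e].
exact: sum_le3_unique cut_in v1 v2 v1S v2S v1e v2e.
Qed.

(* The theorem is stated over natural numbers. *)
Local Close Scope ring_scope.

Theorem mainTheorem15 (V : finType) (e : rel V) :
  simple_graph e ->
  min_degree_ge e 4 -> min_degree_ge (compl_graph e) 4 ->
  26 <= #|V| ->
  has_edge_cut_le e 3 ->
  in_S3 (compl_graph e).
Proof.
move=> e_simple deg_e deg_ec V26 [S [S0 ST cut3]].
(* one of the two sides of the cut has at least 13 vertices outside it *)
have [far13 | near] := leqP 13 #|~: S|.
  exact: S3_compl_small_cut e_simple deg_e deg_ec S0 cut3 far13.
apply: (S3_compl_small_cut (S := ~: S)) => //.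
- by apply: contra ST => /eqP CS0; rewrite -[S]setCK CS0 setC0.
- by rewrite cut_sizeC //; case: e_simple.
- by rewrite setCK; have := cardsC S; lia.
Qed.
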